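(* Let $S\subseteq V$ be fixed and let $R_1,\dots,R_T$ be $T$ independent IBSs drawn from $\Omega^n$. Let $\mu=\mathbb{E}[Z_j(S)]$. Then for every $\lambda>0$: $$\Pr\Big[\sum_{j=1}^T Z_j(S)-T\mu\ge\lambda\Big]\le\exp\!\left(-\frac{\lambda^2}{\frac{2}{3}\rho\lambda+2p(S)\mu T}\right),$$ $$\Pr\Big[\sum_{j=1}^T Z_j(S)-T\mu\le-\lambda\Big]\le\exp\!\left(-\frac{\lambda^2}{2p(S)\mu T}\right).$$
   Context: Setting: $G=(V,E)$ is a directed graph under the Independent Cascade model with edge probabilities $p(u,v)\in(0,1)$. Each node has benefit $b(u)\ge0$, and $\Gamma=\sum_u b(u)>0$. For each node $u$, $\gamma(u)=1-\prod_{v\in N_{in}(u)}(1-p(v,u))$, and $\Phi=\sum_u\gamma(u)b(u)>0$. IBS distribution $\Omega^n$: pick a source $u$ with probability $\gamma(u)b(u)/\Phi$. Then output the set of nodes that can reach $u$ in a random live-edge graph (each edge kept independently with probability $p(e)$), conditioned on at least one in-edge of $u$ being kept. For $S\subseteq V$ and a sample $R_j$ define the following quantities: - $X_j(S)=\min\{1,|S\cap R_j|\}$; - $\mu_{\min}(S)=\sum_{v\in S}(1-\gamma(v))b(v)/\Gamma$; - $\rho=\Phi/\Gamma$; - $\mu_{\max}(S)=\rho+\mu_{\min}(S)$; - $Z_j(S)=\rho X_j(S)+\mu_{\min}(S)$; - $p(S)=\min\{\rho,\ \mu_{\max}(S)+\mu_{\min}(S)-2\sqrt{\mu_{\min}(S)\mu_{\max}(S)}\}$.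 *)

From Stdlib Require Import Reals Lra List Classical ClassicalEpsilon Relations.
Import ListNotations.
Open Scope R_scope.

(* Nodes are the naturals 0..n-1; a directed edge (v,u) goes from v to u. *)
Definition edge := (nat * nat)%type.

Fixpoint sumR {A : Type} (f : A -> R) (l : list A) : R :=
  match l with [] => 0 | x :: t => f x + sumR f t end.
Fixpoint prodR {A : Type} (f : A -> R) (l : list A) : R :=
  match l with [] => 1 | x :: t => f x * prodR f t end.

Definition ind (P : Prop) : R :=
  if excluded_middle_informative P then 1 else 0.

Definition nodes (n : nat) : list nat := seq 0 n.

Definition gamma (E : list edge) (p : nat -> nat -> R) (u : nat) : R :=
  1 - prodR (fun e => 1 - p (fst e) (snd e))
            (filter (fun e => Nat.eqb (snd e) u) E).

Definition Gamma (n : nat) (b : nat -> R) : R := sumR b (nodes n).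

Definition Phi (n : nat) (E : list edge) (p : nat -> nat -> R) (b : nat -> R) : R :=
  sumR (fun u => gamma E p u * b u) (nodes n).

(* Live-edge graphs: a mask (list bool aligned with E), bit true = edge kept. *)
Fixpoint masks (k : nat) : list (list bool) :=
  match k with
  | O => [[]]
  | S k => map (cons true) (masks k) ++ map (cons false) (masks k)
  end.

Definition all_masks (E : list edge) : list (list bool) := masks (length E).

Definition mask_prob (E : list edge) (p : nat -> nat -> R) (m : list bool) : R :=
  prodR (fun em : edge * bool =>
           if snd em then p (fst (fst em)) (snd (fst em))
           else 1 - p (fst (fst em)) (snd (fst em)))
        (combine E m).

Definition kept (E : list edge) (m : list bool) : list edge :=
  map fst (filter snd (combine E m)).

Definition Reaches (E : list edge) (m : list bool) (v u : nat) : Prop :=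
  clos_refl_trans nat (fun x y => In (x, y) (kept E m)) v u.

Definition in_kept (E : list edge) (m : list bool) (u : nat) : Prop :=
  exists e, In e (kept E m) /\ snd e = u.

(* Outcomes of one IBS draw: (source u, live-edge graph m) *)
Definition outcomes (n : nat) (E : list edge) : list (nat * list bool) :=
  list_prod (nodes n) (all_masks E).

Definition cond_mass (E : list edge) (p : nat -> nat -> R) (u : nat) : R :=
  sumR (fun m => mask_prob E p m * ind (in_kept E m u)) (all_masks E).

(* probability of outcome (u,m) under Omega^n *)
Definition ibs_weight (n : nat) (E : list edge) (p : nat -> nat -> R) (b : nat -> R)
    (o : nat * list bool) : R :=
  (gamma E p (fst o) * b (fst o) / Phi n E p b) *
  (mask_prob E p (snd o) * ind (in_kept E (snd o) (fst o)) / cond_mass E p (fst o)).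

(* X_j(S) = min{1, |S ∩ R_j|}, R_j = nodes that reach the source *)
Definition Xf (E : list edge) (S : list nat) (o : nat * list bool) : R :=
  Rmin 1 (sumR (fun v => ind (Reaches E (snd o) v (fst o))) S).

Definition mu_min (n : nat) (E : list edge) (p : nat -> nat -> R) (b : nat -> R)
    (S : list nat) : R :=
  sumR (fun v => (1 - gamma E p v) * b v) S / Gamma n b.

Definition rho (n : nat) (E : list edge) (p : nat -> nat -> R) (b : nat -> R) : R :=
  Phi n E p b / Gamma n b.

Definition mu_max n E p b S : R := rho n E p b + mu_min n E p b S.

Definition Zf n E p b S (o : nat * list bool) : R :=
  rho n E p b * Xf E S o + mu_min n E p b S.

Definition pS n E p b S : R :=
  Rmin (rho n E p b)
       (mu_max n E p b S + mu_min n E p b S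
        - 2 * sqrt (mu_min n E p b S * mu_max n E p b S)).

Definition mu n E p b S : R :=
  sumR (fun o => ibs_weight n E p b o * Zf n E p b S o) (outcomes n E).

Fixpoint tuples {A : Type} (l : list A) (T : nat) : list (list A) :=
  match T with
  | O => [[]]
  | S T => flat_map (fun x => map (cons x) (tuples l T)) l
  end.

(* Probability, over T independent IBS draws, of event Q on the samples *)
Definition PrT n E p b (T : nat) (Q : list (nat * list bool) -> Prop) : R :=
  sumR (fun t => prodR (ibs_weight n E p b) t * ind (Q t))
       (tuples (outcomes n E) T).

Definition sumZ n E p b S (t : list (nat * list bool)) : R :=
  sumR (Zf n E p b S) t.

From Pilot Require Import Defs.
From Stdlib Require Import Reals Lra Lia List ClassicalEpsilon.
From Coquelicot Require Import Coquelicot.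
Open Scope R_scope.

(* Z_j(S) = rho X_j + mu_min with X_j a 0-1 variable of mean q, so mu = rho q + mu_min
   and everything reduces to the centred Bernoulli moment generating function
   M(t) = E exp(t (X - q)).  The Chernoff bound gives
   Pr[sum_j rho (X_j - q) >= lam] <= exp(-s lam) M(s rho)^T for every s >= 0.
   For the upper tail, ln M(t) <= q(1-q)(e^t - 1 - t) <= q(1-q) t^2 / (2 (1 - t/3));
   for the lower tail, ln M(-t) <= v t^2 / 2 whenever v bounds a(1-a) for all a <= q.
   A perfect-square identity shows rho^2 a(1-a) <= p(S) mu for every a <= q, and
   optimising s yields the two stated exponents. *)

Lemma exp_le x y : x <= y -> exp x <= exp y.
Proof. intros [Hlt | ->]; [left; exact (exp_increasing _ _ Hlt) | lra]. Qed.

(* For [y = 0] this holds because Rocq's division gives [x / 0 = 0]. *)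
Lemma Rdiv_nonneg x y : 0 <= x -> 0 <= y -> 0 <= x / y.
Proof.
  intros Hx [Hy | <-]; [apply Rle_mult_inv_pos; assumption |].
  unfold Rdiv. rewrite Rinv_0, Rmult_0_r. lra.
Qed.

Lemma pow_le_exp_mul M B T : 0 <= M <= exp B -> M ^ T <= exp (INR T * B).
Proof.
  intro HM. apply Rle_trans with (exp B ^ T); [apply pow_incr; exact HM |].
  induction T as [| T IH]; simpl pow.
  - rewrite Rmult_0_l, exp_0. lra.
  - rewrite S_INR, Rmult_plus_distr_r, Rmult_1_l, Rplus_comm, exp_plus.
    apply Rmult_le_compat_l; [left; apply exp_pos | exact IH].
Qed.

Lemma le_of_derive_nonneg (g g' : R -> R) :
  (forall t, is_derive g t (g' t)) -> (forall t, 0 <= t -> 0 <= g' t) ->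
  forall t, 0 <= t -> g 0 <= g t.
Proof.
  intros Hd Hpos t Ht.
  destruct (MVT_gen g 0 t g') as [c [Hc Hmvt]].
  - intros; apply Hd.
  - intros x _. apply continuity_pt_filterlim, (ex_derive_continuous g x).
    eexists; apply Hd.
  - rewrite Rmin_left, Rmax_right in Hc by lra.
    assert (0 <= g' c * (t - 0)) by (apply Rmult_le_pos; [apply Hpos |]; lra).
    lra.
Qed.

Lemma nonneg_of_derive2_nonneg (f f' f'' : R -> R) :
  (forall t, is_derive f t (f' t)) -> (forall t, is_derive f' t (f'' t)) ->
  (forall t, 0 <= t -> 0 <= f'' t) -> f 0 = 0 -> f' 0 = 0 ->
  forall t, 0 <= t -> 0 <= f t.
Proof.
  intros Hf Hf' Hf'' Hf0 Hf'0 t Ht.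
  assert (Hf'_nonneg : forall u, 0 <= u -> 0 <= f' u).
  { intros u Hu. pose proof (le_of_derive_nonneg f' f'' Hf' Hf'' u Hu). lra. }
  pose proof (le_of_derive_nonneg f f' Hf Hf'_nonneg t Ht). lra.
Qed.

(** * The centred Bernoulli moment generating function *)

Lemma bernstein_exp_ineq t : 0 <= t -> (1 - t / 3) * (exp t - 1 - t) <= t ^ 2 / 2.
Proof.
  intro Ht.
  enough (0 <= t ^ 2 / 2 - (1 - t / 3) * (exp t - 1 - t)) by lra.
  apply (nonneg_of_derive2_nonneg (fun t => t ^ 2 / 2 - (1 - t / 3) * (exp t - 1 - t))
           (fun t => t / 3 + 2 / 3 - 2 / 3 * exp t + t * exp t / 3)
           (fun t => (1 - exp t * (1 - t)) / 3)); [| | | rewrite exp_0; lra ..| exact Ht].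
  - intro u. auto_derive; [exact I | lra].
  - intro u. auto_derive; [exact I | lra].
  - intros u Hu.
    assert (Hinv : exp u * exp (- u) = 1) by (rewrite <- exp_plus, Rplus_opp_r; apply exp_0).
    pose proof (exp_ineq1_le (- u)). pose proof (exp_pos u). nra.
Qed.

Lemma bernoulli_mgf_pos q t : 0 <= q <= 1 -> 0 < 1 - q + q * exp t.
Proof. intro Hq. pose proof (exp_pos t). destruct (Req_dec q 0); [subst; lra | nra]. Qed.

Lemma ln_bernoulli_mgf_le q t : 0 <= q <= 1 -> 0 <= t ->
  ln (1 - q + q * exp t) - t * q <= q * (1 - q) * (exp t - 1 - t).
Proof.
  intros Hq Ht. pose proof (bernoulli_mgf_pos q) as HD.
  enough (0 <= q * (1 - q) * (exp t - 1 - t) - (ln (1 - q + q * exp t) - t * q)) by lra.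
  apply (nonneg_of_derive2_nonneg
           (fun u => q * (1 - q) * (exp u - 1 - u) - (ln (1 - q + q * exp u) - u * q))
           (fun u => q * (1 - q) * (exp u - 1) - (q * exp u / (1 - q + q * exp u) - q))
           (fun u => q * (1 - q) * exp u
                     - q * (1 - q) * exp u / (1 - q + q * exp u) ^ 2)); auto.
  - intro u. specialize (HD u Hq). auto_derive; [lra | field; lra].
  - intro u. specialize (HD u Hq). auto_derive; [lra | field; lra].
  - intros u Hu. specialize (HD u Hq).
    assert (1 <= exp u) by (pose proof (exp_ineq1_le u); lra).
    assert (1 <= 1 - q + q * exp u) by nra.
    assert (Hden : 1 <= (1 - q + q * exp u) ^ 2) by nra.
    assert (0 <= q * (1 - q) * exp u) by (pose proof (exp_pos u); apply Rmult_le_pos; nra).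
    assert (q * (1 - q) * exp u / (1 - q + q * exp u) ^ 2 <= q * (1 - q) * exp u).
    { apply Rle_div_l; [lra |]. rewrite <- (Rmult_1_r (q * (1 - q) * exp u)) at 1.
      apply Rmult_le_compat_l; lra. }
    lra.
  - replace (1 - q + q * exp 0) with 1 by (rewrite exp_0; ring).
    rewrite exp_0, ln_1. lra.
  - replace (1 - q + q * exp 0) with 1 by (rewrite exp_0; ring).
    rewrite exp_0. field.
Qed.

Lemma ln_bernoulli_mgf_opp_le q v t : 0 <= q <= 1 -> 0 <= t ->
  (forall a, 0 <= a <= q -> a * (1 - a) <= v) ->
  ln (1 - q + q * exp (- t)) + t * q <= t ^ 2 * v / 2.
Proof.
  intros Hq Ht Hv. pose proof (fun u => bernoulli_mgf_pos q (- u) Hq) as HD.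
  enough (0 <= t ^ 2 * v / 2 - (ln (1 - q + q * exp (- t)) + t * q)) by lra.
  apply (nonneg_of_derive2_nonneg
           (fun u => u ^ 2 * v / 2 - (ln (1 - q + q * exp (- u)) + u * q))
           (fun u => u * v - (- (q * exp (- u)) / (1 - q + q * exp (- u)) + q))
           (fun u => v - q * (1 - q) * exp (- u) / (1 - q + q * exp (- u)) ^ 2)); auto.
  - intro u. specialize (HD u). auto_derive; [lra | field; lra].
  - intro u. specialize (HD u). auto_derive; [lra | field; lra].
  - intros u Hu. specialize (HD u).
    (* The second derivative of the log-mgf is the variance a (1 - a) of a tilted
       Bernoulli variable, whose mean a is at most q when the tilt is negative. *)
    set (D := 1 - q + q * exp (- u)) in *.
    set (a := q * exp (- u) / D).
    assert (exp (- u) <= 1) by (rewrite <- exp_0; apply exp_le; lra).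
    assert (0 < exp (- u)) by apply exp_pos.
    assert (0 <= a) by (apply Rle_mult_inv_pos; [apply Rmult_le_pos |]; lra).
    assert (a <= q).
    { apply Rle_div_l; [lra |]. unfold D.
      assert (0 <= q * (1 - q) * (1 - exp (- u))) by (apply Rmult_le_pos; nra). nra. }
    replace (q * (1 - q) * exp (- u) / D ^ 2) with (a * (1 - a)) by (unfold a, D in *; field; lra).
    specialize (Hv a ltac:(lra)). lra.
  - replace (1 - q + q * exp (- 0)) with 1 by (rewrite Ropp_0, exp_0; ring).
    rewrite ln_1. lra.
  - replace (1 - q + q * exp (- 0)) with 1 by (rewrite Ropp_0, exp_0; ring).
    rewrite Ropp_0, exp_0. field.
Qed.

Definition centered_bernoulli_mgf (q t : R) : R := exp (- (t * q)) * (1 - q + q * exp t).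

Lemma centered_bernoulli_mgf_exp_ln q t : 0 <= q <= 1 ->
  centered_bernoulli_mgf q t = exp (ln (1 - q + q * exp t) - t * q).
Proof.
  intro Hq. unfold centered_bernoulli_mgf, Rminus.
  rewrite exp_plus, exp_ln by (apply bernoulli_mgf_pos; exact Hq). ring.
Qed.

Lemma centered_bernoulli_mgf_nonneg q t : 0 <= q <= 1 -> 0 <= centered_bernoulli_mgf q t.
Proof. intro Hq. rewrite centered_bernoulli_mgf_exp_ln by exact Hq. left; apply exp_pos. Qed.

Lemma centered_bernoulli_mgf_le q t : 0 <= q <= 1 -> 0 <= t < 3 ->
  centered_bernoulli_mgf q t <= exp (q * (1 - q) * t ^ 2 / (2 * (1 - t / 3))).
Proof.
  intros Hq Ht. rewrite centered_bernoulli_mgf_exp_ln by exact Hq. apply exp_le.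
  eapply Rle_trans; [apply ln_bernoulli_mgf_le; lra |].
  assert (exp t - 1 - t <= t ^ 2 / 2 / (1 - t / 3)).
  { apply Rle_div_r; [lra |]. rewrite Rmult_comm. apply bernstein_exp_ineq; lra. }
  replace (q * (1 - q) * t ^ 2 / (2 * (1 - t / 3)))
    with (q * (1 - q) * (t ^ 2 / 2 / (1 - t / 3))) by (field; lra).
  apply Rmult_le_compat_l; nra.
Qed.

Lemma centered_bernoulli_mgf_opp_le q v t : 0 <= q <= 1 -> 0 <= t ->
  (forall a, 0 <= a <= q -> a * (1 - a) <= v) ->
  centered_bernoulli_mgf q (- t) <= exp (v * t ^ 2 / 2).
Proof.
  intros Hq Ht Hv. rewrite centered_bernoulli_mgf_exp_ln by exact Hq. apply exp_le.
  pose proof (ln_bernoulli_mgf_opp_le q v t Hq Ht Hv). lra.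
Qed.

(** * Optimising the Chernoff exponent; the variance bound *)

Lemma bernstein_exponent_attained r W lam : 0 < r -> 0 <= W -> 0 < lam ->
  exists s, 0 <= s /\ s * r < 3 /\
    - (s * lam) + s ^ 2 * W / (2 * (1 - s * r / 3))
    = - (lam ^ 2 / (2 / 3 * r * lam + 2 * W)).
Proof.
  intros Hr HW Hlam. destruct HW as [HW | <-].
  - exists (lam / (W + r * lam / 3)).
    assert (0 < W + r * lam / 3) by nra.
    split; [apply Rlt_le, Rdiv_lt_0_compat; lra |]. split.
    + unfold Rdiv. rewrite Rmult_assoc, (Rmult_comm (/ _)), <- Rmult_assoc.
      apply Rlt_div_l; nra.
    + field. split; [lra |].
      replace (W * 3 + r * lam - lam * r) with (3 * W) by ring. lra.
  - exists (3 / (2 * r)). split; [| split].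
    + apply Rlt_le, Rdiv_lt_0_compat; lra.
    + field_simplify; lra.
    + field. lra.
Qed.

(* For [W = 0] both sides are [0]: Rocq's division gives [lam ^ 2 / 0 = 0]. *)
Lemma gaussian_exponent_attained W lam : 0 <= W -> 0 < lam ->
  exists s, 0 <= s /\ - (s * lam) + s ^ 2 * W / 2 = - (lam ^ 2 / (2 * W)).
Proof.
  intros [HW | <-] Hlam.
  - exists (lam / W). split; [apply Rlt_le, Rdiv_lt_0_compat | field]; lra.
  - exists 0. split; [lra |].
    replace (2 * 0) with 0 by ring. unfold Rdiv. rewrite Rinv_0. ring.
Qed.

Lemma pS_variance_bound r m q a : 0 < r -> 0 <= m -> 0 <= a <= q ->
  r ^ 2 * (a * (1 - a))
  <= Rmin r ((r + m) + m - 2 * sqrt (m * (r + m))) * (r * q + m).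
Proof.
  intros Hr Hm Ha. set (s := sqrt (m * (r + m))).
  assert (Hs : s * s = m * (r + m)) by (apply sqrt_sqrt; nra).
  assert (0 <= s) by apply sqrt_pos.
  assert (Hmin : Rmin r ((r + m) + m - 2 * s) = r + 2 * m - 2 * s).
  { rewrite Rmin_right; [ring |]. nra. }
  assert (Hnonneg : 0 <= r + 2 * m - 2 * s) by nra.
  rewrite Hmin.
  (* The gap is a perfect square: (r + 2m - 2s)(ra + m) - r^2 a (1 - a) = (ra + m - s)^2. *)
  assert (r ^ 2 * (a * (1 - a)) <= (r + 2 * m - 2 * s) * (r * a + m)).
  { assert (0 <= (r * a + m - s) ^ 2) by apply pow2_ge_0. nra. }
  assert ((r + 2 * m - 2 * s) * (r * a + m) <= (r + 2 * m - 2 * s) * (r * q + m))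
    by (apply Rmult_le_compat_l; nra).
  lra.
Qed.

Lemma sumR_app {A} (f : A -> R) l1 l2 : sumR f (l1 ++ l2) = sumR f l1 + sumR f l2.
Proof. induction l1 as [| x l1 IH]; simpl; [| rewrite IH]; ring. Qed.

Lemma sumR_map {A B} (f : B -> R) (g : A -> B) l :
  sumR f (map g l) = sumR (fun x => f (g x)) l.
Proof. induction l as [| x l IH]; simpl; [| rewrite IH]; reflexivity. Qed.

Lemma sumR_flat_map {A B} (f : B -> R) (g : A -> list B) l :
  sumR f (flat_map g l) = sumR (fun x => sumR f (g x)) l.
Proof. induction l as [| x l IH]; simpl; [| rewrite sumR_app, IH]; reflexivity. Qed.

Lemma sumR_list_prod {A B} (f : A * B -> R) l1 l2 :
  sumR f (list_prod l1 l2) = sumR (fun x => sumR (fun y => f (x, y)) l2) l1.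
Proof. induction l1 as [| x l1 IH]; simpl; [| rewrite sumR_app, sumR_map, IH]; reflexivity. Qed.

Lemma sumR_scal_l {A} (f : A -> R) c l : sumR (fun x => c * f x) l = c * sumR f l.
Proof. induction l as [| x l IH]; simpl; [| rewrite IH]; ring. Qed.

Lemma sumR_scal_r {A} (f : A -> R) c l : sumR (fun x => f x * c) l = sumR f l * c.
Proof. induction l as [| x l IH]; simpl; [| rewrite IH]; ring. Qed.

Lemma sumR_plus {A} (f g : A -> R) l : sumR (fun x => f x + g x) l = sumR f l + sumR g l.
Proof. induction l as [| x l IH]; simpl; [| rewrite IH]; ring. Qed.

Lemma sumR_opp {A} (f : A -> R) l : sumR (fun x => - f x) l = - sumR f l.
Proof. induction l as [| x l IH]; simpl; [| rewrite IH]; ring. Qed.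

Lemma sumR_sub_const {A} (f : A -> R) c l :
  sumR (fun x => f x - c) l = sumR f l - INR (length l) * c.
Proof. induction l as [| x l IH]; simpl length; simpl sumR; [simpl |rewrite IH, S_INR]; ring. Qed.

Lemma sumR_ext_in {A} (f g : A -> R) l :
  (forall x, In x l -> f x = g x) -> sumR f l = sumR g l.
Proof.
  induction l as [| x l IH]; simpl; intro H; [reflexivity |].
  rewrite (H x), IH by auto. reflexivity.
Qed.

Lemma sumR_le_in {A} (f g : A -> R) l :
  (forall x, In x l -> f x <= g x) -> sumR f l <= sumR g l.
Proof.
  induction l as [| x l IH]; simpl; intro H; [lra |].
  apply Rplus_le_compat; auto.
Qed.

Lemma sumR_nonneg {A} (f : A -> R) l : (forall x, In x l -> 0 <= f x) -> 0 <= sumR f l.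
Proof.
  induction l as [| x l IH]; simpl; intro H; [lra |].
  apply Rplus_le_le_0_compat; auto.
Qed.

Lemma sumR_pos_in {A} (f : A -> R) l y :
  (forall x, In x l -> 0 <= f x) -> In y l -> 0 < f y -> 0 < sumR f l.
Proof.
  induction l as [| x l IH]; simpl; intros H Hy Hfy; [contradiction |].
  destruct Hy as [<- | Hy].
  - pose proof (sumR_nonneg f l (fun z Hz => H z (or_intror Hz))). lra.
  - pose proof (IH (fun z Hz => H z (or_intror Hz)) Hy Hfy).
    pose proof (H x (or_introl eq_refl)). lra.
Qed.

Lemma prodR_pos {A} (f : A -> R) l : (forall x, In x l -> 0 < f x) -> 0 < prodR f l.
Proof. induction l; simpl; intros; [lra |]. apply Rmult_lt_0_compat; auto. Qed.

Lemma prodR_nonneg {A} (f : A -> R) l : (forall x, In x l -> 0 <= f x) -> 0 <= prodR f l.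
Proof. induction l; simpl; intros; [lra |]. apply Rmult_le_pos; auto. Qed.

Lemma prodR_le_1 {A} (f : A -> R) l : (forall x, In x l -> 0 <= f x <= 1) -> prodR f l <= 1.
Proof.
  induction l as [| x l IH]; simpl; intro H; [lra |].
  pose proof (prodR_nonneg f l (fun z Hz => proj1 (H z (or_intror Hz)))).
  pose proof (IH (fun z Hz => H z (or_intror Hz))). destruct (H x (or_introl eq_refl)). nra.
Qed.

Lemma in_tuples {A} (l : list A) T t :
  In t (tuples l T) -> length t = T /\ forall x, In x t -> In x l.
Proof.
  revert t; induction T as [| T IH]; simpl; intros t Ht.
  - destruct Ht as [<- | []]. split; [reflexivity | intros _ []].
  - apply in_flat_map in Ht as [x [Hx Ht]]. apply in_map_iff in Ht as [t' [<- Ht']].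
    destruct (IH t' Ht') as [Hlen Hin]. split; [simpl; auto |].
    intros y [<- | Hy]; auto.
Qed.

Lemma ind_01 (P : Prop) : 0 <= Defs.ind P <= 1.
Proof. unfold Defs.ind; destruct excluded_middle_informative; lra. Qed.

Lemma ind_le (P : Prop) e : (P -> 1 <= e) -> 0 <= e -> Defs.ind P <= e.
Proof. unfold Defs.ind; destruct excluded_middle_informative; auto. Qed.

Lemma ind_iff (P Q : Prop) : (P <-> Q) -> Defs.ind P = Defs.ind Q.
Proof. intro H. unfold Defs.ind; do 2 destruct excluded_middle_informative; tauto. Qed.

Definition expectation {A} (l : list A) (w f : A -> R) : R := sumR (fun x => w x * f x) l.

Definition tuple_prob {A} (l : list A) (w : A -> R) (T : nat) (Q : list A -> Prop) : R :=
  sumR (fun t => prodR w t * Defs.ind (Q t)) (tuples l T).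

Lemma tuple_prob_ext {A} (l : list A) w T (Q Q' : list A -> Prop) :
  (forall t, length t = T -> (Q t <-> Q' t)) -> tuple_prob l w T Q = tuple_prob l w T Q'.
Proof.
  intro H. apply sumR_ext_in. intros t Ht.
  rewrite (ind_iff _ _ (H t (proj1 (in_tuples l T t Ht)))). reflexivity.
Qed.

Lemma sum_tuples_prodR_exp {A} (l : list A) (w F : A -> R) T :
  sumR (fun t => prodR w t * exp (sumR F t)) (tuples l T)
  = expectation l w (fun x => exp (F x)) ^ T.
Proof.
  unfold expectation. induction T as [| T IH]; simpl.
  - rewrite exp_0. ring.
  - rewrite sumR_flat_map, <- IH, <- sumR_scal_r. apply sumR_ext_in. intros x _.
    rewrite sumR_map, <- sumR_scal_l. apply sumR_ext_in. intros t _. simpl.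
    rewrite exp_plus. ring.
Qed.

Lemma chernoff_tuple_prob {A} (l : list A) (w Y : A -> R) T c s :
  (forall x, In x l -> 0 <= w x) -> 0 <= s ->
  tuple_prob l w T (fun t => sumR Y t >= c)
  <= exp (- (s * c)) * expectation l w (fun x => exp (s * Y x)) ^ T.
Proof.
  intros Hw Hs. unfold tuple_prob.
  rewrite <- sum_tuples_prodR_exp, <- sumR_scal_l. apply sumR_le_in. intros t Ht.
  pose proof (prodR_nonneg w t (fun x Hx => Hw x (proj2 (in_tuples l T t Ht) x Hx))).
  rewrite (Rmult_comm (exp _)), Rmult_assoc. apply Rmult_le_compat_l; [assumption |].
  rewrite <- exp_plus. apply ind_le; [| left; apply exp_pos].
  intro Hc. rewrite sumR_scal_l, <- exp_0. apply exp_le. nra.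
Qed.

(** * Tail bounds for affine images of a 0-1 variable *)

Section AffineBernoulliSamples.

Variables (A : Type) (l : list A) (w X : A -> R).
Hypothesis w_nonneg : forall x, In x l -> 0 <= w x.
Hypothesis w_sum1 : sumR w l = 1.
Hypothesis X_01 : forall x, X x = 0 \/ X x = 1.

Local Notation q := (expectation l w X).

Lemma expectation_ext (f g : A -> R) :
  (forall x, In x l -> f x = g x) -> expectation l w f = expectation l w g.
Proof. intro H. apply sumR_ext_in. intros x Hx. rewrite H by exact Hx. reflexivity. Qed.

Lemma expectation_affine (f : A -> R) r c :
  expectation l w (fun x => r * f x + c) = r * expectation l w f + c.
Proof.
  unfold expectation.
  rewrite (sumR_ext_in _ (fun x => r * (w x * f x) + w x * c)) by (intros; ring).
  rewrite sumR_plus, sumR_scal_l, sumR_scal_r, w_sum1. ring.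
Qed.

Lemma expectation_01_range : 0 <= q <= 1.
Proof.
  split.
  - apply sumR_nonneg. intros x Hx. pose proof (w_nonneg x Hx).
    destruct (X_01 x) as [-> | ->]; lra.
  - rewrite <- w_sum1. apply sumR_le_in. intros x Hx. pose proof (w_nonneg x Hx).
    destruct (X_01 x) as [-> | ->]; lra.
Qed.

Lemma expectation_exp_centered t :
  expectation l w (fun x => exp (t * (X x - q))) = centered_bernoulli_mgf q t.
Proof.
  unfold expectation at 1.
  rewrite (sumR_ext_in _ (fun x => exp (- (t * q)) * (w x + (exp t - 1) * (w x * X x)))).
  - rewrite sumR_scal_l, sumR_plus, sumR_scal_l, w_sum1.
    fold (expectation l w X). unfold centered_bernoulli_mgf. ring.
  - intros x _. destruct (X_01 x) as [-> | ->].
    + replace (t * (0 - q)) with (- (t * q)) by ring. ring.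
    + replace (t * (1 - q)) with (- (t * q) + t) by ring. rewrite exp_plus. ring.
Qed.

Lemma affine_sample_deviation r c t :
  sumR (fun x => r * X x + c) t - INR (length t) * (r * q + c)
  = sumR (fun x => r * (X x - q)) t.
Proof.
  rewrite <- sumR_sub_const. apply sumR_ext_in. intros; ring.
Qed.

Lemma affine_upper_tail r c V lam T : 0 < r -> r ^ 2 * (q * (1 - q)) <= V -> 0 < lam ->
  tuple_prob l w T (fun t => sumR (fun x => r * X x + c) t - INR T * (r * q + c) >= lam)
  <= exp (- (lam ^ 2 / (2 / 3 * r * lam + 2 * V * INR T))).
Proof.
  intros Hr HV Hlam. pose proof expectation_01_range as Hq.
  assert (HTV : 0 <= INR T * V).
  { apply Rmult_le_pos; [apply pos_INR |].
    assert (0 <= r ^ 2 * (q * (1 - q))) by (apply Rmult_le_pos; nra). lra. }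
  destruct (bernstein_exponent_attained r (INR T * V) lam Hr HTV Hlam) as [s [Hs [Hsr Hexp]]].
  replace (2 * V * INR T) with (2 * (INR T * V)) by ring. rewrite <- Hexp.
  rewrite (tuple_prob_ext l w T _ (fun t => sumR (fun x => r * (X x - q)) t >= lam))
    by (intros t <-; rewrite affine_sample_deviation; reflexivity).
  eapply Rle_trans; [apply chernoff_tuple_prob with (s := s); assumption |].
  rewrite (expectation_ext _ (fun x => exp ((s * r) * (X x - q))))
    by (intros; rewrite Rmult_assoc; reflexivity).
  rewrite expectation_exp_centered, exp_plus.
  apply Rmult_le_compat_l; [left; apply exp_pos |].
  eapply Rle_trans.
  { apply pow_le_exp_mul. split; [apply centered_bernoulli_mgf_nonneg; exact Hq |].
    apply centered_bernoulli_mgf_le; [exact Hq | nra]. }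
  apply exp_le.
  replace (INR T * (q * (1 - q) * (s * r) ^ 2 / (2 * (1 - s * r / 3))))
    with (INR T * s ^ 2 / (2 * (1 - s * r / 3)) * (r ^ 2 * (q * (1 - q)))) by (field; lra).
  replace (s ^ 2 * (INR T * V) / (2 * (1 - s * r / 3)))
    with (INR T * s ^ 2 / (2 * (1 - s * r / 3)) * V) by (field; lra).
  apply Rmult_le_compat_l; [| exact HV].
  apply Rle_mult_inv_pos; [apply Rmult_le_pos; [apply pos_INR | nra] | lra].
Qed.

Lemma affine_lower_tail r c V lam T : 0 < r ->
  (forall a, 0 <= a <= q -> r ^ 2 * (a * (1 - a)) <= V) -> 0 < lam ->
  tuple_prob l w T (fun t => sumR (fun x => r * X x + c) t - INR T * (r * q + c) <= - lam)
  <= exp (- (lam ^ 2 / (2 * V * INR T))).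
Proof.
  intros Hr HV Hlam. pose proof expectation_01_range as Hq.
  assert (HTV : 0 <= INR T * V).
  { apply Rmult_le_pos; [apply pos_INR |].
    pose proof (HV 0 ltac:(lra)) as HV0. rewrite Rmult_0_l, Rmult_0_r in HV0. exact HV0. }
  destruct (gaussian_exponent_attained (INR T * V) lam HTV Hlam) as [s [Hs Hexp]].
  replace (2 * V * INR T) with (2 * (INR T * V)) by ring. rewrite <- Hexp.
  rewrite (tuple_prob_ext l w T _ (fun t => sumR (fun x => - (r * (X x - q))) t >= lam))
    by (intros t <-; rewrite affine_sample_deviation, sumR_opp; split; intro; lra).
  eapply Rle_trans; [apply chernoff_tuple_prob with (s := s); assumption |].
  rewrite (expectation_ext _ (fun x => exp (- (s * r) * (X x - q))))
    by (intros; f_equal; ring).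
  rewrite expectation_exp_centered, exp_plus.
  apply Rmult_le_compat_l; [left; apply exp_pos |].
  eapply Rle_trans.
  { apply pow_le_exp_mul. split; [apply centered_bernoulli_mgf_nonneg; exact Hq |].
    apply (centered_bernoulli_mgf_opp_le q (V / r ^ 2)); [exact Hq | nra |].
    intros a Ha. apply (Rle_div_r _ _ (r ^ 2)); [apply pow_lt; exact Hr |].
    rewrite Rmult_comm. exact (HV a Ha). }
  apply exp_le. right. field. lra.
Qed.

End AffineBernoulliSamples.

(** * The IBS distribution *)

Lemma repeat_true_in_masks k : In (repeat true k) (masks k).
Proof. induction k; simpl; auto. apply in_or_app; left. apply in_map; auto. Qed.

Lemma kept_repeat_true (E : list edge) : kept E (repeat true (length E)) = E.
Proof. induction E as [| e E IH]; [reflexivity |]. unfold kept in *. simpl. f_equal; exact IH. Qed.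

Section IBS.

Variables (n : nat) (E : list edge) (p : nat -> nat -> R) (b : nat -> R).
Hypothesis p_range : forall e, In e E -> 0 < p (fst e) (snd e) < 1.
Hypothesis b_nonneg : forall u, (u < n)%nat -> 0 <= b u.
Hypothesis Phi_pos : 0 < Phi n E p b.

Lemma gamma_range u : 0 <= gamma E p u < 1.
Proof.
  unfold gamma. set (l := filter (fun e => Nat.eqb (snd e) u) E).
  assert (Hl : forall e, In e l -> 0 < 1 - p (fst e) (snd e) <= 1).
  { intros e He. apply filter_In in He as [He _]. specialize (p_range e He). lra. }
  pose proof (prodR_pos _ l (fun e He => proj1 (Hl e He))).
  pose proof (prodR_le_1 _ l
                (fun e He => conj (Rlt_le _ _ (proj1 (Hl e He))) (proj2 (Hl e He)))).
  lra.
Qed.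

Lemma mask_prob_pos m : 0 < mask_prob E p m.
Proof.
  apply prodR_pos. intros [e kept_e] H. apply in_combine_l in H.
  specialize (p_range e H). simpl. destruct kept_e; lra.
Qed.

Lemma cond_mass_nonneg u : 0 <= cond_mass E p u.
Proof.
  apply sumR_nonneg. intros m _.
  apply Rmult_le_pos; [left; apply mask_prob_pos | apply ind_01].
Qed.

(* If [u] has an in-edge, the live-edge graph keeping every edge lies in the conditioning event. *)
Lemma gamma_eq0_or_cond_mass_pos u : gamma E p u = 0 \/ 0 < cond_mass E p u.
Proof.
  destruct (filter (fun e => Nat.eqb (snd e) u) E) as [| e l] eqn:Hin.
  - left. unfold gamma. rewrite Hin. simpl. ring.
  - right. assert (He : In e (filter (fun e => Nat.eqb (snd e) u) E)) by (rewrite Hin; left; auto).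
    apply filter_In in He as [He Hu]. apply Nat.eqb_eq in Hu.
    apply sumR_pos_in with (repeat true (length E)).
    + intros m _. apply Rmult_le_pos; [left; apply mask_prob_pos | apply ind_01].
    + apply repeat_true_in_masks.
    + apply Rmult_lt_0_compat; [apply mask_prob_pos |].
      unfold Defs.ind; destruct excluded_middle_informative as [_ | Hn]; [lra |].
      exfalso; apply Hn. exists e. rewrite kept_repeat_true. auto.
Qed.

Lemma ibs_weight_nonneg o : In o (outcomes n E) -> 0 <= ibs_weight n E p b o.
Proof.
  destruct o as [u m]. intro Ho. apply in_prod_iff in Ho as [Hu _].
  apply in_seq in Hu. pose proof (gamma_range u). pose proof (b_nonneg u ltac:(lia)).
  unfold ibs_weight; simpl. apply Rmult_le_pos; apply Rdiv_nonneg.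
  - apply Rmult_le_pos; lra.
  - lra.
  - apply Rmult_le_pos; [left; apply mask_prob_pos | apply ind_01].
  - apply cond_mass_nonneg.
Qed.

(* When [gamma u = 0] the conditioning event may be empty, but then the
   source [u] has probability zero, so nothing is lost. *)
Lemma ibs_weight_sum1 : sumR (ibs_weight n E p b) (outcomes n E) = 1.
Proof.
  unfold outcomes. rewrite sumR_list_prod.
  transitivity (sumR (fun u => gamma E p u * b u / Phi n E p b) (nodes n)).
  - apply sumR_ext_in. intros u _. unfold ibs_weight; simpl.
    rewrite sumR_scal_l. unfold Rdiv at 2. rewrite sumR_scal_r. fold (cond_mass E p u).
    destruct (gamma_eq0_or_cond_mass_pos u) as [-> | Hc].
    + unfold Rdiv. ring.
    + rewrite Rinv_r by lra. ring.
  - unfold Rdiv. rewrite sumR_scal_r. fold (Phi n E p b). apply Rinv_r. lra.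
Qed.

End IBS.

Lemma sumR_ind_eq0_or_ge1 {A} (P : A -> Prop) l :
  sumR (fun x => Defs.ind (P x)) l = 0 \/ 1 <= sumR (fun x => Defs.ind (P x)) l.
Proof.
  induction l as [| x l IH]; simpl; [auto |].
  unfold Defs.ind in *. destruct (excluded_middle_informative (P x)); lra.
Qed.

Lemma Xf_01 E S o : Xf E S o = 0 \/ Xf E S o = 1.
Proof.
  unfold Xf. destruct (sumR_ind_eq0_or_ge1 (fun v => Reaches E (snd o) v (fst o)) S) as [-> | H].
  - left. apply Rmin_right. lra.
  - right. apply Rmin_left. exact H.
Qed.

Lemma mu_min_nonneg n E p b S :
  (forall e, In e E -> 0 < p (fst e) (snd e) < 1) -> (forall u, (u < n)%nat -> 0 <= b u) ->
  0 < Gamma n b -> (forall v, In v S -> (v < n)%nat) -> 0 <= mu_min n E p b S.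
Proof.
  intros Hp Hb HG HS. apply Rdiv_nonneg; [| lra].
  apply sumR_nonneg. intros v Hv. pose proof (gamma_range E p Hp v).
  apply Rmult_le_pos; [lra | apply Hb, HS, Hv].
Qed.

Theorem lemma5 (n : nat) (E : list edge) (p : nat -> nat -> R) (b : nat -> R)
  (S : list nat) (T : nat) (lam : R)
  (HEnd : NoDup E)
  (HErange : forall e, In e E -> (fst e < n)%nat /\ (snd e < n)%nat)
  (Hp : forall e, In e E -> 0 < p (fst e) (snd e) < 1)
  (Hb : forall u, (u < n)%nat -> 0 <= b u)
  (HGamma : 0 < Gamma n b)
  (HPhi : 0 < Phi n E p b)
  (HSnd : NoDup S)
  (HSrange : forall v, In v S -> (v < n)%nat)
  (Hlam : 0 < lam) :
  PrT n E p b T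
      (fun t => sumZ n E p b S t - INR T * mu n E p b S >= lam)
  <= exp (- (lam ^ 2 / (2 / 3 * rho n E p b * lam
                        + 2 * pS n E p b S * mu n E p b S * INR T)))
  /\
  PrT n E p b T
      (fun t => sumZ n E p b S t - INR T * mu n E p b S <= - lam)
  <= exp (- (lam ^ 2 / (2 * pS n E p b S * mu n E p b S * INR T))).
Proof.
  set (l := outcomes n E). set (w := ibs_weight n E p b).
  set (q := expectation l w (Xf E S)).
  set (r := rho n E p b). set (m := mu_min n E p b S).
  assert (Hw : forall o, In o l -> 0 <= w o) by exact (ibs_weight_nonneg n E p b Hp Hb HPhi).
  assert (Hw1 : sumR w l = 1) by exact (ibs_weight_sum1 n E p b Hp HPhi).
  assert (Hr : 0 < r) by (apply Rdiv_lt_0_compat; assumption).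
  assert (Hm : 0 <= m) by (apply mu_min_nonneg; assumption).
  assert (Hq : 0 <= q <= 1) by exact (expectation_01_range _ l w (Xf E S) Hw Hw1 (Xf_01 E S)).
  assert (Hmu : mu n E p b S = r * q + m) by exact (expectation_affine _ l w Hw1 (Xf E S) r m).
  assert (Hvar : forall a, 0 <= a <= q -> r ^ 2 * (a * (1 - a)) <= pS n E p b S * (r * q + m))
    by (intros a Ha; exact (pS_variance_bound r m q a Hr Hm Ha)).
  rewrite Hmu.
  replace (2 * pS n E p b S * (r * q + m)) with (2 * (pS n E p b S * (r * q + m))) by ring.
  split.
  - exact (affine_upper_tail _ l w (Xf E S) Hw Hw1 (Xf_01 E S) r m _ lam T
             Hr (Hvar q ltac:(lra)) Hlam).
  - exact (affine_lower_tail _ l w (Xf E S) Hw Hw1 (Xf_01 E S) r m _ lam T Hr Hvar Hlam).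
Qed.
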